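(* Let $p$ be a prime and let $n,m,N\in\mathbb{N}$ with $0<n\le m<N/3$. Then $n\mid_p m$ if and only if there exists $\alpha\in\mathbb{F}_p[t]/(t^N)$ such that $$\alpha^p(t^n-t^m)=t^nt^m(1-\alpha^{p-1}) \quad\text{and}\quad \alpha^{3p}\neq 0 \quad\text{in } \mathbb{F}_p[t]/(t^N).$$
   Context: For $n,m\in\mathbb{N}$, $n\mid_p m$ means $m=p^s n$ for some $s\in\mathbb{N}$. *)

From mathcomp Require Import all_boot all_order all_algebra.
Set Implicit Arguments. Unset Strict Implicit. Unset Printing Implicit Defensive.
Import GRing.Theory.
Local Open Scope ring_scope.

Definition pdvd (p n m : nat) : Prop := exists s : nat, m = (p ^ s * n)%N.

(* Equality in the quotient ring F[t]/(t^N), with elements represented by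
   polynomials in {poly F}: a = b in F[t]/(t^N) iff t^N divides a - b. *)
Definition eq_mod_tN (F : fieldType) (N : nat) (a b : {poly F}) : bool :=
  ('X^N %| a - b)%R.

(* If m = p^(s+1) n, put k = p^s n and let
   G = sum_(i <= s) t^(k - p^i n), the "chain polynomial", whose constant
   term is 1.  Since Frobenius is additive, G^p - t^(k(p-1)) G telescopes to
   1 - t^(m-n), so the truncated series alpha = t^k / G solves the equation,
   and alpha^(3p) = t^(3m) * unit is nonzero because 3m < N.  The case
   m = n is solved by alpha = 1.

   Write alpha = t^v e with e(0) <> 0.  Comparing the
   lowest-order terms of both sides forces v p = m.  Multiplying by the
   p-th power of the inverse eta of e, the equation becomes
   eta^p = 1 - t^(m-n) + t^(v(p-1)) eta  modulo t^(N-n-m); reading off the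
   coefficient of t^(m-x) shows that eta_(v-x) <> 0 with x <> n forces
   x = p y with eta_(v-y) <> 0.  Descending from x = v (eta_0 <> 0) we reach
   x = n, hence v = p^j n and m = p^(j+1) n. *)

From mathcomp Require Import all_boot all_order all_algebra.
From mathcomp Require Import finfield ring zify.
Import GRing.Theory.
Local Open Scope ring_scope.

Section TruncatedSeries.
Context {F : fieldType}.

Lemma coef_dvdXn {K i : nat} {q : {poly F}} : 'X^K %| q -> (i < K)%N -> q`_i = 0.
Proof. by move=> /dvdpP [r ->] hi; rewrite coefMXn hi. Qed.

Lemma coef0_exp (q : {poly F}) (j : nat) : (q ^+ j)`_0 = q`_0 ^+ j.
Proof. by rewrite -!horner_coef0 horner_exp. Qed.

Lemma dvdp_exp_sub1 (d u : {poly F}) (j : nat) : d %| u - 1 -> d %| u ^+ j - 1.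
Proof. by move=> du; rewrite -(expr1n _ j) subrXX dvdp_mulr. Qed.

(* A series with nonzero constant term is invertible modulo every t^K;
   the inverse is corrected one power of t at a time. *)
Lemma truncated_inverse (K : nat) {g : {poly F}} :
  g`_0 != 0 -> exists h, 'X^K %| g * h - 1.
Proof.
move=> g0; elim: K => [|K [h /dvdpP [r hr]]].
  by exists 0; rewrite expr0 dvd1p.
set c := ((g`_0)^-1)%:P.
exists (h - c * (r * 'X^K)).
have -> : g * (h - c * (r * 'X^K)) - 1 = (r * 'X^K) * (1 - c * g).
  by rewrite mulrBr -[g * h](subrK 1) hr; ring.
rewrite exprSr; apply: dvdp_mul; first exact: dvdp_mull.
rewrite -[X in X %| _]subr0 -polyC0 dvdp_XsubCl /root horner_coef0.
by rewrite coefB coef1 coefCM mulVf // subrr.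
Qed.

Lemma coef0_truncated_inverse {N : nat} {g h : {poly F}} :
  (0 < N)%N -> 'X^N %| g * h - 1 -> g`_0 * h`_0 = 1.
Proof.
move=> N0 /coef_dvdXn/(_ N0)/eqP.
by rewrite coefB coef0M coef1 subr_eq0 => /eqP.
Qed.

Lemma coef_lowest_term {N a b : nat} {u w : {poly F}} :
  (a < b)%N -> (a < N)%N -> 'X^N %| 'X^a * u - 'X^b * w -> u`_0 = 0.
Proof.
move=> ab aN /coef_dvdXn/(_ aN).
by rewrite coefB !coefXnM ltnn subnn ab subr0.
Qed.

Lemma not_eqmod0_Xn_mul (N a : nat) (e : {poly F}) :
  (a < N)%N -> e`_0 != 0 -> ~~ eq_mod_tN N ('X^a * e) 0.
Proof.
move=> aN e0; apply: contra e0 => /coef_dvdXn/(_ aN)/eqP.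
by rewrite subr0 coefXnM ltnn subnn.
Qed.

Lemma valuation_factor {alpha : {poly F}} :
  alpha != 0 -> exists v e, alpha = 'X^v * e /\ e`_0 != 0.
Proof.
move=> a0.
have nz : exists i, alpha`_i != 0.
  by exists (size alpha).-1; rewrite -lead_coefE lead_coef_eq0.
have [v hv hmin] := ex_minnP nz.
exists v, (drop_poly v alpha); split; last by rewrite coef_drop_poly add0n.
rewrite -{1}(poly_take_drop v alpha) mulrC.
rewrite [take_poly _ _](_ : _ = 0) ?add0r //; apply/polyP => i.
rewrite coef_take_poly coef0; case: ifP => // iv; apply/eqP.
by apply: contraLR iv => /hmin; rewrite -leqNgt.
Qed.

End TruncatedSeries.

(* The Frobenius endomorphism of F_p[t]: it is additive and, since the
   coefficients satisfy c^p = c, it is the substitution t |-> t^p. *)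
Section Frobenius.
Variable p : nat.
Hypothesis hp : prime p.

Lemma pchar_poly_Fp : p \in [pchar {poly 'F_p}].
Proof. by rewrite pchar_poly pchar_Fp. Qed.

Lemma frobenius_sum (I : Type) (r : seq I) (f : I -> {poly 'F_p}) :
  (\sum_(i <- r) f i) ^+ p = \sum_(i <- r) f i ^+ p.
Proof.
rewrite -(pFrobenius_autE pchar_poly_Fp) rmorph_sum.
by apply: eq_bigr => i _; apply: pFrobenius_autE.
Qed.

Lemma frobenius_comp (q : {poly 'F_p}) : q ^+ p = q \Po 'X^p.
Proof.
elim/poly_ind: q => [|q c IH].
  by rewrite comp_poly0 expr0n gtn_eqF // prime_gt0.
rewrite -!(pFrobenius_autE pchar_poly_Fp) rmorphD rmorphM /= !pFrobenius_autE.
rewrite IH comp_polyD comp_polyM comp_polyX comp_polyC -rmorphXn /=.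
by have := expf_card c; rewrite card_Fp // => ->.
Qed.

Lemma coef_frobenius (q : {poly 'F_p}) (j : nat) :
  (q ^+ p)`_j = if (p %| j)%N then q`_(j %/ p) else 0.
Proof. by rewrite frobenius_comp coef_comp_poly_Xn // prime_gt0. Qed.

End Frobenius.

Definition witness_eq (p n m N : nat) (alpha : {poly 'F_p}) : bool :=
  eq_mod_tN N (alpha ^+ p * ('X^n - 'X^m)) ('X^n * 'X^m * (1 - alpha ^+ p.-1)).

Definition chainPoly {R : nzSemiRingType} (p n s : nat) : {poly R} :=
  \sum_(0 <= i < s.+1) 'X^(p ^ s * n - p ^ i * n).

(* Only the term i = s contributes to the constant term. *)
Lemma chainPoly_coef0 (R : nzSemiRingType) (p n s : nat) :
  (1 < p)%N -> (0 < n)%N -> (chainPoly p n s : {poly R})`_0 = 1.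
Proof.
move=> p1 n0; rewrite /chainPoly big_nat_recr //= coefD coef_sum coefXn subnn.
rewrite big1_seq ?add0r // => i; rewrite mem_index_iota => /andP [_ hi].
have : (p ^ i * n < p ^ s * n)%N by rewrite ltn_pmul2r // ltn_exp2l.
by rewrite coefXn => lt; case: eqP => //; lia.
Qed.

Lemma chainPoly_telescope (p n s : nat) (hp : prime p) :
  let k := (p ^ s * n)%N in
  'X^(n + k * p) * (chainPoly p n s ^+ p - 'X^(k * p.-1) * chainPoly p n s)
    = 'X^(k * p) * ('X^n - 'X^(k * p)) :> {poly 'F_p}.
Proof.
move=> k; set m := (k * p)%N; set f := fun i => (n + 2 * m - p ^ i * n)%N.
have p0 : (0 < p)%N := prime_gt0 hp.
have below i : (i < s.+1)%N -> (p ^ i * n <= k)%N.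
  by move=> hi; rewrite leq_mul2r leq_exp2l ?prime_gt1 // -ltnS hi orbT.
have Frob_terms : 'X^(n + m) * chainPoly p n s ^+ p
                  = \sum_(0 <= i < s.+1) 'X^(f i.+1) :> {poly 'F_p}.
  rewrite frobenius_sum // big_distrr; apply: eq_big_nat => i /andP [_ hi].
  rewrite /= -exprM -exprD /f expnSr; congr ('X^_).
  have := below i hi; rewrite mulnBl /m; nia.
have shift_terms : 'X^(n + m) * ('X^(k * p.-1) * chainPoly p n s)
                  = \sum_(0 <= i < s.+1) 'X^(f i) :> {poly 'F_p}.
  rewrite mulrA -exprD big_distrr; apply: eq_big_nat => i /andP [_ hi].
  rewrite /= -exprD /f; congr ('X^_).
  have pP : (k * p.-1 + k = k * p)%N by rewrite -mulnSr prednK.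
  have := below i hi; rewrite -/k /m; lia.
rewrite mulrBr Frob_terms shift_terms -sumrB telescope_sumr // /f expn0 mul1n.
have -> : (n + 2 * m - p ^ s.+1 * n = n + m)%N by rewrite expnSr /m /k; lia.
have -> : (n + 2 * m - n = m + m)%N by lia.
by rewrite !exprD; ring.
Qed.

Lemma chainPoly_witness (p n s N : nat) (hp : prime p) (hn : (0 < n)%N)
  (hN : (3 * (p ^ s.+1 * n) < N)%N) :
  exists2 alpha : {poly 'F_p}, witness_eq p n (p ^ s.+1 * n) N alpha
    & ~~ eq_mod_tN N (alpha ^+ (3 * p)) 0.
Proof.
set k := (p ^ s * n)%N.
have km : (p ^ s.+1 * n = k * p)%N by rewrite expnSr mulnAC.
rewrite km in hN *.
have p1 := prime_gt1 hp.
have N0 : (0 < N)%N by lia.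
set G : {poly 'F_p} := chainPoly p n s.
have G0 : G`_0 = 1 := chainPoly_coef0 _ p n s p1 hn.
have [h Gh1] : exists h, 'X^N %| G * h - 1.
  by apply: truncated_inverse; rewrite G0 oner_eq0.
have h0 : h`_0 = 1 by have := coef0_truncated_inverse N0 Gh1; rewrite G0 mul1r.
exists ('X^k * h).
  have tele := chainPoly_telescope p n s hp; rewrite /= -/k -/G in tele.
  have hpP : h ^+ p = h * h ^+ p.-1 by rewrite -exprS prednK ?prime_gt0.
  rewrite /witness_eq /eq_mod_tN; set alpha := 'X^k * h.
  have -> : alpha ^+ p * ('X^n - 'X^(k * p)) - 'X^n * 'X^(k * p) * (1 - alpha ^+ p.-1)
          = 'X^(n + k * p) * (((G * h) ^+ p - 1) - alpha ^+ p.-1 * (G * h - 1)).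
    apply/eqP; rewrite -subr_eq0; apply/eqP.
    transitivity (h ^+ p * ('X^(k * p) * ('X^n - 'X^(k * p))
      - 'X^(n + k * p) * (G ^+ p - 'X^(k * p.-1) * G))); last first.
      by rewrite tele subrr mulr0.
    by rewrite /alpha !exprMn -!exprM exprD hpP; ring.
  apply: dvdp_mull; apply: dvdp_sub; first exact: dvdp_exp_sub1.
  exact: dvdp_mull.
rewrite exprMn -exprM; apply: not_eqmod0_Xn_mul; first lia.
by rewrite coef0_exp h0 expr1n oner_eq0.
Qed.

Lemma pdvd_descent {p n x : nat} {P : nat -> Prop} : (1 < p)%N ->
  (forall y, (0 < y)%N -> P y -> y <> n -> exists2 z, y = (p * z)%N & P z) ->
  (0 < x)%N -> P x -> pdvd p n x.
Proof.
move=> p1 step; elim/ltn_ind: x => x IH x0 Px.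
have [-> | xn] := eqVneq x n; first by exists 0%N; rewrite mul1n.
have [y xy Py] := step x x0 Px (elimN eqP xn).
have y0 : (0 < y)%N by move: x0; rewrite xy muln_gt0 => /andP [].
have [j yj] : pdvd p n y by apply: IH => //; rewrite xy -[y in (y < _)%N]mul1n ltn_mul2r y0.
by exists j.+1; rewrite xy yj expnS mulnA.
Qed.

Section Witness.
Variables (p n m N : nat).
Hypotheses (hp : prime p) (hnm : (n < m)%N) (hmN : (3 * m < N)%N).

Let p1 : (1 < p)%N := prime_gt1 hp.
Let Xm : 'X^m = 'X^n * 'X^(m - n) :> {poly 'F_p}.
Proof. by rewrite -exprD subnKC // ltnW. Qed.

Lemma witness_exponent {alpha : {poly 'F_p}} {v : nat} {e : {poly 'F_p}} :
  witness_eq p n m N alpha -> alpha = 'X^v * e -> e`_0 != 0 -> (v * p = m)%N.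
Proof.
rewrite /witness_eq /eq_mod_tN -exprD => hcong ha e0.
set u := e ^+ p * (1 - 'X^(m - n)); set w := 1 - alpha ^+ p.-1 in hcong.
have u0 : u`_0 != 0.
  rewrite coef0M coefB coef1 coefXn eqxx (eq_sym 0%N) subn_eq0 leqNgt hnm subr0 mulr1.
  by rewrite coef0_exp expf_neq0.
have Xu : alpha ^+ p * ('X^n - 'X^m) = 'X^(v * p + n) * u.
  by rewrite ha /u exprMn -exprM exprD Xm; ring.
rewrite Xu in hcong.
have nmN : (n + m < N)%N by lia.
case: (ltngtP (v * p + n) (n + m)) => [lt|gt|]; last by lia.
  by move: u0; rewrite (coef_lowest_term lt _ hcong) ?eqxx //; lia.
have v0 : (0 < v)%N by case: (v) gt => //=; lia.
have hcong' : 'X^N %| 'X^(n + m) * w - 'X^(v * p + n) * u by rewrite -dvdpNr opprB.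
have P0 : (p.-1 == 0)%N = false by lia.
move: (coef_lowest_term gt nmN hcong') => /eqP.
by rewrite coefB coef1 coef0_exp ha coefXnM v0 expr0n P0 subr0 oner_eq0.
Qed.

Lemma witness_inverse_relation {alpha : {poly 'F_p}} {v : nat} {e eta : {poly 'F_p}} :
  witness_eq p n m N alpha -> alpha = 'X^v * e -> (v * p = m)%N ->
  'X^N %| e * eta - 1 ->
  'X^(N - (n + m)) %| 1 - 'X^(m - n) - eta ^+ p + 'X^(v * p.-1) * eta.
Proof.
move=> hcong ha vp inv; set r := (X in _ %| X).
have eP (q : {poly 'F_p}) : q ^+ p = q * q ^+ p.-1 by rewrite -exprS prednK ?prime_gt0.
have : 'X^N %| 'X^(n + m) * r.
  have -> : 'X^(n + m) * r = eta ^+ p * (alpha ^+ p * ('X^n - 'X^m)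
        - 'X^n * 'X^m * (1 - alpha ^+ p.-1))
      - 'X^(n + m) * (((e * eta) ^+ p - 1) * (1 - 'X^(m - n))
        + 'X^(v * p.-1) * eta * ((e * eta) ^+ p.-1 - 1)).
    by rewrite ha !exprMn -!exprM vp /r exprD Xm !eP; ring.
  apply: dvdp_sub; first exact: dvdp_mull.
  apply: dvdp_mull; apply: dvdp_add; first by apply: dvdp_mulr; apply: dvdp_exp_sub1.
  by apply: dvdp_mull; apply: dvdp_exp_sub1.
have -> : 'X^N = 'X^(n + m) * 'X^(N - (n + m)) :> {poly 'F_p}.
  by rewrite -exprD subnKC //; lia.
by rewrite dvdp_mul2l // monic_neq0 // monicXn.
Qed.

(* Coefficient of t^(m-x) in that relation: a nonzero eta_(v-x) with x <> n
   forces x = p y with eta_(v-y) nonzero. *)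
Lemma witness_chain_step {v : nat} {eta : {poly 'F_p}} :
  (v * p = m)%N ->
  'X^(N - (n + m)) %| 1 - 'X^(m - n) - eta ^+ p + 'X^(v * p.-1) * eta ->
  forall x, (0 < x)%N -> (x <= v)%N /\ eta`_(v - x) != 0 -> x <> n ->
  exists2 y, x = (p * y)%N & (y <= v)%N /\ eta`_(v - y) != 0.
Proof.
move=> vp hr x x0 [xv ex] xn.
have vP : (v * p.-1 + v = m)%N by rewrite -mulnSr prednK ?prime_gt0.
have vm : (v < m)%N by rewrite -vp -[v in (v < _)%N]muln1 ltn_mul2l p1 andbT; lia.
have klt : (m - x < N - (n + m))%N by lia.
move: hr => /coef_dvdXn/(_ klt)/eqP.
rewrite !coefD !coefN coef1 coefXn coefXnM coef_frobenius //.
have -> : (m - x == 0)%N = false by lia.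
have -> : (m - x == m - n)%N = false by lia.
have -> : (m - x < v * p.-1)%N = false by lia.
have -> : (m - x - v * p.-1 = v - x)%N by lia.
rewrite subrr sub0r dvdn_subr; last by rewrite -vp dvdn_mull.
  case: ifP => [/dvdnP [y xy] | _]; last by rewrite oppr0 add0r (negbTE ex).
  have -> : ((m - x) %/ p = v - y)%N by rewrite -vp xy -mulnBl mulnK ?prime_gt0.
  rewrite addrC subr_eq0 => /eqP eq_coef; exists y; first by rewrite xy mulnC.
  by rewrite -eq_coef; split => //; apply: leq_trans xv; rewrite xy leq_pmulr ?prime_gt0.
by lia.
Qed.

Lemma witness_pdvd (alpha : {poly 'F_p}) :
  witness_eq p n m N alpha -> ~~ eq_mod_tN N (alpha ^+ (3 * p)) 0 -> pdvd p n m.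
Proof.
move=> hcong hnz.
have a0 : alpha != 0.
  apply: contraNneq hnz => ->.
  by rewrite expr0n muln_eq0 (gtn_eqF (prime_gt0 hp)) /eq_mod_tN subr0 dvdp0.
have [v [e [ha e0]]] := valuation_factor a0.
have vp : (v * p = m)%N := witness_exponent hcong ha e0.
have v0 : (0 < v)%N by move: vp; case: (v) => //=; lia.
have [eta inv] := truncated_inverse N e0.
have eta0 : eta`_0 != 0.
  have N0 : (0 < N)%N by lia.
  by apply: contra_eq_neq (coef0_truncated_inverse N0 inv) => ->; rewrite mulr0 eq_sym oner_neq0.
have step := witness_chain_step vp (witness_inverse_relation hcong ha vp inv).
have start : (v <= v)%N /\ eta`_(v - v) != 0 by rewrite subnn.
have [j vj] := pdvd_descent p1 step v0 start.
by exists j.+1; rewrite -vp vj expnSr mulnAC.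
Qed.
End Witness.

Lemma pdvd_witness {p n s N : nat} (hp : prime p) (hn : (0 < n)%N)
  (hN : (3 * (p ^ s * n) < N)%N) :
  exists2 alpha : {poly 'F_p}, witness_eq p n (p ^ s * n) N alpha
    & ~~ eq_mod_tN N (alpha ^+ (3 * p)) 0.
Proof.
case: s hN => [|s] hN; last exact: chainPoly_witness.
exists 1.
  by rewrite /witness_eq expn0 mul1n /eq_mod_tN !expr1n !subrr !mulr0 subrr dvdp0.
have -> : (1 : {poly 'F_p}) ^+ (3 * p) = 'X^0 * 1 by rewrite expr1n expr0 mulr1.
by apply: not_eqmod0_Xn_mul; [lia | rewrite coef1 oner_eq0].
Qed.

Theorem mainTheorem6 (p n m N : nat) (hp : prime p)
  (hn : (0 < n)%N) (hnm : (n <= m)%N) (hmN : (3 * m < N)%N) :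
  pdvd p n m <->
  exists alpha : {poly 'F_p},
    eq_mod_tN N (alpha ^+ p * ('X^n - 'X^m))
                ('X^n * 'X^m * (1 - alpha ^+ (p.-1)))
    /\ ~~ eq_mod_tN N (alpha ^+ (3 * p)) 0.
Proof.
split=> [[s ms] | [alpha [hcong hnz]]].
  by rewrite ms in hmN *; have [alpha ? ?] := pdvd_witness hp hn hmN; exists alpha.
have [-> | nm] := eqVneq n m; first by exists 0%N; rewrite mul1n.
have ltnm : (n < m)%N by rewrite ltn_neqAle nm.
exact: (witness_pdvd p n m N hp ltnm hmN alpha hcong hnz).
Qed.
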